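(* Let $x,y\ge 1$ and let $n\ge \max(x,y)$ be an integer for which minimal $(x,y)$ task-dependency graphs of order $n$ exist. The maximum possible number of edges of a minimal $(x,y)$ task-dependency graph of order $n$ is $0$ if $n=\max(x,y)$ (in which case $x=y$), $2n-x-y-1$ if $n=\max(x,y)+1$, and $2n-x-y-2$ if $n>\max(x,y)+1$.
   Context: A task-dependency graph is a finite directed acyclic graph (no loops, no multiple edges). A vertex is initial if it has in-degree $0$ and terminal if it has out-degree $0$; an isolated vertex counts as both initial and terminal. An $(x,y)$ task-dependency graph is a task-dependency graph with exactly $x$ initial vertices and exactly $y$ terminal vertices. A minimal $(x,y)$ task-dependency graph is an $(x,y)$ task-dependency graph such that removing any single edge produces a graph that is not an $(x,y)$ task-dependency graph. The order of a graph is its number of vertices. *)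

From mathcomp Require Import all_boot.
Set Implicit Arguments. Unset Strict Implicit. Unset Printing Implicit Defensive.

(* A finite directed graph on vertex set 'I_n is a relation e : rel 'I_n
   (e u v means there is an edge u -> v); a relation has no multiple edges. *)

(* acyclic: no loops and no directed cycles: an edge u -> v never has a
   (possibly empty) directed path back from v to u. *)
Definition acyclic (n : nat) (e : rel 'I_n) : Prop :=
  forall u v : 'I_n, e u v -> ~~ connect e v u.

Definition initial (n : nat) (e : rel 'I_n) (v : 'I_n) : bool :=
  [forall u, ~~ e u v].

Definition terminal (n : nat) (e : rel 'I_n) (v : 'I_n) : bool :=
  [forall w, ~~ e v w].

Definition num_initial (n : nat) (e : rel 'I_n) : nat := #|[set v | initial e v]|.
Definition num_terminal (n : nat) (e : rel 'I_n) : nat := #|[set v | terminal e v]|.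

Definition tdg (x y : nat) (n : nat) (e : rel 'I_n) : Prop :=
  acyclic e /\ num_initial e = x /\ num_terminal e = y.

Definition num_edges (n : nat) (e : rel 'I_n) : nat :=
  #|[set p : 'I_n * 'I_n | e p.1 p.2]|.

Definition remove_edge (n : nat) (e : rel 'I_n) (a b : 'I_n) : rel 'I_n :=
  [rel u v | e u v && ((u, v) != (a, b))].

Definition minimal_tdg (x y n : nat) (e : rel 'I_n) : Prop :=
  tdg x y e /\ forall a b : 'I_n, e a b -> ~ tdg x y (remove_edge e a b).

(* An edge a -> b can be deleted from an (x,y) task-dependency graph without
   changing x and y unless it is the only edge into b or the only edge out of
   a, so a graph is minimal exactly when every edge is of one of these two
   kinds.  Edges of the first kind inject, via their target, into the n - x
   non-initial vertices; a vertex with two in-edges is a non-initial vertex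
   missed by this injection.  Dually for the second kind and the n - y
   non-terminal vertices.  Hence either every edge is of the first kind (at
   most n - x edges), or every edge is of the second kind (at most n - y), or
   there are at most 2n - x - y - 2 edges.  The bounds are attained by double
   stars: a source pointing to a set S of vertices and a set T of vertices
   pointing to a sink, with |S| + |T| edges. *)

From mathcomp Require Import all_boot zify.
Set Implicit Arguments. Unset Strict Implicit. Unset Printing Implicit Defensive.

Section TaskDependencyGraphs.
Variable n : nat.
Implicit Types (e : rel 'I_n) (a b u v : 'I_n).

Definition converse e : rel 'I_n := [rel u v | e v u].

Definition sole_in_edge e a b := [forall u, e u b ==> (u == a)].
Definition sole_out_edge e a b := [forall w, e a w ==> (w == b)].

Definition locally_minimal e :=
  forall a b, e a b -> sole_in_edge e a b || sole_out_edge e a b.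

Lemma num_initial_converse e : num_initial (converse e) = num_terminal e.
Proof. by []. Qed.

Lemma num_edges_converse e : num_edges (converse e) = num_edges e.
Proof.
rewrite /num_edges -(card_imset _ (can_inj swap_pairK)).
by rewrite (can2_imset_pre _ swap_pairK swap_pairK); apply: eq_card => -[u v]; rewrite !inE.
Qed.

Lemma noninitial_target e a b : e a b -> ~~ initial e b.
Proof. by move=> eab; rewrite negb_forall; apply/existsP; exists a; rewrite negbK. Qed.

Lemma eq_num_initial e e' : e =2 e' -> num_initial e = num_initial e'.
Proof.
by move=> eq_e; apply: eq_card => v; rewrite !inE; apply: eq_forallb => u; rewrite eq_e.
Qed.

Lemma initial_remove_edge e a b v : e a b ->
  initial (remove_edge e a b) v = initial e v || (v == b) && sole_in_edge e a b.
Proof.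
move=> eab; rewrite /initial /sole_in_edge /remove_edge.
have [->|neq_vb] := eqVneq v b; last first.
  by rewrite orbF; apply: eq_forallb => u; rewrite /= xpair_eqE (negbTE neq_vb) andbF andbT.
have -> : [forall u, ~~ e u b] = false by apply/forallP => /(_ a); rewrite eab.
by apply: eq_forallb => u; rewrite /= xpair_eqE eqxx andbT negb_and negbK implybE.
Qed.

Lemma num_initial_remove_edge e a b : e a b ->
  num_initial (remove_edge e a b) = num_initial e + sole_in_edge e a b.
Proof.
move=> eab; rewrite /num_initial.
have b_noninitial : b \notin [set v | initial e v] by rewrite inE (noninitial_target eab).
case: (boolP (sole_in_edge e a b)) => sole_ab.
  have -> : [set v | initial (remove_edge e a b) v] = b |: [set v | initial e v].
    by apply/setP => v; rewrite !inE initial_remove_edge // sole_ab andbT orbC.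
  by rewrite cardsU1 b_noninitial addnC.
rewrite addn0.
by apply: eq_card => v; rewrite !inE initial_remove_edge // (negbTE sole_ab) andbF orbF.
Qed.

Lemma num_terminal_remove_edge e a b : e a b ->
  num_terminal (remove_edge e a b) = num_terminal e + sole_out_edge e a b.
Proof.
move=> eab; rewrite -(@num_initial_remove_edge (converse e) b a) //.
by apply: eq_num_initial => u v; rewrite /remove_edge /= !xpair_eqE [(u == b) && _]andbC.
Qed.

Lemma acyclic_rank e (r : 'I_n -> nat) : (forall u v, e u v -> r u < r v) -> acyclic e.
Proof.
move=> r_mono u v euv; apply/negP => /connectP[p].
have r_last w q : path e w q -> r w <= r (last w q).
  elim: q w => [|z q IHq] w //= /andP[ewz zq].
  exact: leq_trans (ltnW (r_mono _ _ ewz)) (IHq _ zq).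
move=> /r_last + u_last; rewrite -u_last => le_vu.
by have := leq_ltn_trans le_vu (r_mono _ _ euv); rewrite ltnn.
Qed.

Lemma acyclic_remove_edge e a b : acyclic e -> acyclic (remove_edge e a b).
Proof.
move=> acyc_e u v /andP[euv _]; apply: contra (acyc_e u v euv).
by apply: connect_sub => w z /andP[ewz _]; exact: connect1.
Qed.

Lemma tdg_remove_edge x y e a b : tdg x y e -> e a b ->
  tdg x y (remove_edge e a b) <-> ~~ (sole_in_edge e a b || sole_out_edge e a b).
Proof.
move=> [acyc_e [<- <-]] eab.
rewrite /tdg num_initial_remove_edge // num_terminal_remove_edge //.
case: (sole_in_edge e a b); case: (sole_out_edge e a b); split=> //=;
  try by case=> _ []; lia.
by move=> _; rewrite !addn0; split=> //; exact: acyclic_remove_edge.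
Qed.

Lemma minimal_tdgE x y e : minimal_tdg x y e <-> tdg x y e /\ locally_minimal e.
Proof.
split=> [[tdg_e min_e]|[tdg_e lmin_e]]; split=> // a b eab.
  apply/negPn/negP => not_forced; apply: (min_e a b eab).
  exact/(tdg_remove_edge tdg_e eab).
by move/(tdg_remove_edge tdg_e eab); rewrite lmin_e.
Qed.

Definition sole_in_edges e :=
  [set p : 'I_n * 'I_n | e p.1 p.2 && sole_in_edge e p.1 p.2].

Lemma card_noninitial e : #|~: [set v | initial e v]| = n - num_initial e.
Proof. by have := cardsC [set v | initial e v]; rewrite card_ord /num_initial; lia. Qed.

Lemma card_sole_in_edge_targets e : #|snd @: sole_in_edges e| = #|sole_in_edges e|.
Proof.
apply: card_in_imset => -[a b] [a' b'] /[!inE] /andP[eab _] /andP[_ /forallP sole] /= eq_b.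
by subst b'; move: (sole a); rewrite eab => /eqP->.
Qed.

Lemma sole_in_edge_targets e : snd @: sole_in_edges e \subset ~: [set v | initial e v].
Proof.
apply/subsetP => _ /imsetP[[a b] /[!inE] /andP[eab _] ->].
exact: noninitial_target eab.
Qed.

Lemma card_sole_in_edges_le e : #|sole_in_edges e| <= n - num_initial e.
Proof.
by rewrite -card_sole_in_edge_targets -card_noninitial subset_leq_card ?sole_in_edge_targets.
Qed.

Lemma card_sole_in_edges_lt e b u u' : e u b -> e u' b -> u != u' ->
  #|sole_in_edges e| < n - num_initial e.
Proof.
move=> eub eu'b neq_uu'; rewrite -card_sole_in_edge_targets -card_noninitial.
apply/proper_card/properP; split; first exact: sole_in_edge_targets.
exists b; first by rewrite !inE (noninitial_target eub).
apply/imsetP => -[[a b'] /[!inE] /andP[_ /forallP sole] /= eq_b]; subst b'.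
have /eqP eq_ua := implyP (sole u) eub; have /eqP eq_u'a := implyP (sole u') eu'b.
by rewrite eq_ua eq_u'a eqxx in neq_uu'.
Qed.

Lemma num_edges_sole_in_edges e : (forall b u u', e u b -> e u' b -> u = u') ->
  num_edges e = #|sole_in_edges e|.
Proof.
move=> in_uniq; apply: eq_card => -[a b]; rewrite !inE /=.
case eab: (e a b) => //=; apply/esym/forallP => u.
by apply/implyP => eub; rewrite (in_uniq _ _ _ eub eab).
Qed.

Lemma sole_in_edges_cases e :
  num_edges e = #|sole_in_edges e| \/ #|sole_in_edges e| < n - num_initial e.
Proof.
have [/forallP in_le1|] := boolP [forall b, #|[set u | e u b]| <= 1].
  left; apply: num_edges_sole_in_edges => b u u' eub eu'b.
  by have /card_le1_eqP := in_le1 b; apply; rewrite inE.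
rewrite negb_forall => /existsP[b].
rewrite -ltnNge => /card_gt1P[u [u' [/[!inE] eub eu'b neq]]].
by right; exact: card_sole_in_edges_lt eub eu'b neq.
Qed.

Lemma num_edges_le_sole_edges e : locally_minimal e ->
  num_edges e <= #|sole_in_edges e| + #|sole_in_edges (converse e)|.
Proof.
move=> lmin_e; rewrite -[#|sole_in_edges (converse e)|](card_imset _ (can_inj swap_pairK)).
apply: leq_trans (leq_card_setU _ _); apply: subset_leq_card.
apply/subsetP => -[a b] /[!inE] /= eab; apply/orP.
case/orP: (lmin_e a b eab) => sole; [left | right]; first by rewrite eab sole.
by apply/imsetP; exists (b, a); rewrite // inE; apply/andP.
Qed.

Lemma num_edges_locally_minimal_bound e : locally_minimal e ->
  [\/ num_edges e <= n - num_initial e, num_edges e <= n - num_terminal e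
     | num_edges e + 2 <= (n - num_initial e) + (n - num_terminal e)].
Proof.
move=> lmin_e; have le_sum := num_edges_le_sole_edges lmin_e.
have le_in := card_sole_in_edges_le e.
have := card_sole_in_edges_le (converse e); rewrite num_initial_converse => le_out.
case: (sole_in_edges_cases e) => [eq_in | lt_in]; first by apply: Or31; lia.
case: (sole_in_edges_cases (converse e)) => [eq_out | lt_out].
  by apply: Or32; rewrite -num_edges_converse eq_out.
by apply: Or33; rewrite num_initial_converse in lt_out; lia.
Qed.

Lemma full_initial_full_terminal e : num_initial e = n -> num_terminal e = n.
Proof.
move=> all_initial; have := card_noninitial e.
rewrite all_initial subnn => /cards0_eq no_noninitial.
have initial_e v : initial e v by have := in_set0 v; rewrite -no_noninitial !inE => /negbFE.
rewrite /num_terminal -[RHS]card_ord; apply: eq_card => v; rewrite !inE.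
by apply/forallP => w; exact: (forallP (initial_e w)).
Qed.

Lemma tdg_maxn_full x y e : tdg x y e -> maxn x y = n -> x = n /\ y = n.
Proof.
move=> [_ [<- <-]] max_n.
have := max_card (mem [set v | initial e v]); have := max_card (mem [set v | terminal e v]).
rewrite card_ord -/(num_terminal e) -/(num_initial e) => le_t le_i.
have [full_i | full_t] : num_initial e = n \/ num_terminal e = n by lia.
  by split=> //; exact: full_initial_full_terminal.
by split=> //; rewrite -num_initial_converse in full_t *; exact: full_initial_full_terminal.
Qed.

End TaskDependencyGraphs.

(* The last two hypotheses allow t \in S (resp. s \in T) when T (resp. S)
   is empty, so that single in- and out-stars are double stars too. *)
Section DoubleStar.
Variables (n : nat) (s t : 'I_n) (S T : {set 'I_n}).
Hypotheses (s_neq_t : s != t) (s_notin_S : s \notin S) (t_notin_T : t \notin T).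
Hypotheses (t_in_S : t \in S -> T = set0) (s_in_T : s \in T -> S = set0).

Definition double_star : rel 'I_n :=
  fun u v => (u == s) && (v \in S) || (u \in T) && (v == t).

Lemma double_star_acyclic : acyclic double_star.
Proof.
apply: (@acyclic_rank _ _ (fun v => (v != s) + (v == t))).
move=> u v /orP[/andP[/eqP-> vS] | /andP[uT /eqP->]].
  by rewrite eqxx (negbTE s_neq_t) (memPn s_notin_S v vS).
by rewrite eqxx (eq_sym t) s_neq_t (negbTE (memPn t_notin_T u uT)); case: (u != s).
Qed.

Lemma double_star_locally_minimal : locally_minimal double_star.
Proof.
move=> a b /orP[/andP[/eqP-> bS] | /andP[aT /eqP->]]; apply/orP; [left | right];
  apply/forallP => w; apply/implyP => /orP[/andP[ws wb] | /andP[wa wt]] //.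
- by move: bS; rewrite (eqP wt) => /t_in_S T0; rewrite T0 inE in wa.
- by move: aT; rewrite (eqP ws) => /s_in_T S0; rewrite S0 inE in wb.
Qed.

Lemma noninitial_double_star v :
  ~~ initial double_star v = (v \in S) || (T != set0) && (v == t).
Proof.
rewrite negb_forall; apply/existsP/orP => [[u /negPn/orP[/andP[_ vS] | /andP[uT vt]]] | ].
- by left.
- by right; rewrite vt andbT; apply/set0Pn; exists u.
case=> [vS | /andP[/set0Pn[u uT] /eqP->]].
  by exists s; rewrite negbK /double_star eqxx vS.
by exists u; rewrite negbK /double_star uT eqxx orbT.
Qed.

Lemma num_initial_double_star : num_initial double_star = n - #|S| - (T != set0).
Proof.
suff noninitial_card : #|~: [set v | initial double_star v]| = #|S| + (T != set0).
  have := cardsC [set v | initial double_star v].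
  by rewrite card_ord noninitial_card /num_initial; lia.
have [T0 | T_ne0] := eqVneq T set0.
  by rewrite addn0; apply: eq_card => v; rewrite !inE noninitial_double_star T0 eqxx orbF.
have t_notin_S : t \notin S by apply/negP => /t_in_S T0; rewrite T0 eqxx in T_ne0.
have -> : ~: [set v | initial double_star v] = t |: S.
  by apply/setP => v; rewrite !inE noninitial_double_star T_ne0 orbC.
by rewrite cardsU1 t_notin_S addnC.
Qed.

Lemma num_edges_double_star : num_edges double_star = #|S| + #|T|.
Proof.
have edges : [set p | double_star p.1 p.2] = [set (s, v) | v in S] :|: [set (u, t) | u in T].
  apply/setP => -[u v]; rewrite !inE /double_star /=; apply/idP/orP.
    by case/orP=> [/andP[/eqP-> vS] | /andP[uT /eqP->]]; [left | right];
      apply/imsetP; [exists v | exists u].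
  by case=> /imsetP[w wA [-> ->]]; rewrite eqxx wA ?orbT.
have disjoint_edges : [disjoint [set (s, v) | v in S] & [set (u, t) | u in T]].
  rewrite -setI_eq0; apply/eqP/setP => p; rewrite !inE.
  apply/negP => /andP[/imsetP[v vS ->] /imsetP[u uT [_ vt]]].
  by rewrite vt in vS; rewrite (t_in_S vS) inE in uT.
have out_inj : injective (fun v : 'I_n => (s, v)) by move=> v w [].
have in_inj : injective (fun u : 'I_n => (u, t)) by move=> u w [].
apply/eqP; rewrite /num_edges edges -(card_imset S out_inj) -(card_imset T in_inj).
by rewrite (leq_card_setU _ _).2.
Qed.

End DoubleStar.

Lemma num_terminal_double_star n (s t : 'I_n) (S T : {set 'I_n}) :
  s != t -> s \notin S -> t \notin T -> (t \in S -> T = set0) -> (s \in T -> S = set0) ->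
  num_terminal (double_star s t S T) = n - #|T| - (S != set0).
Proof.
move=> s_neq_t s_notin_S t_notin_T t_in_S s_in_T; rewrite -num_initial_converse.
rewrite (@eq_num_initial _ _ (double_star t s T S)) ?num_initial_double_star // 1?eq_sym //.
by move=> u v; rewrite /converse /double_star /= orbC andbC [(u \in S) && _]andbC.
Qed.

Lemma card_prefix n k : k <= n -> #|[set i : 'I_n | i < k]| = k.
Proof.
move=> le_kn; have widen_inj : injective (widen_ord le_kn) by move=> i j [] /val_inj.
rewrite -[RHS]card_ord -cardsT -(card_imset _ widen_inj); apply: eq_card => i; rewrite inE.
apply/idP/imsetP => [lt_ik | [j _ ->]]; last exact: (ltn_ord j).
by exists (Ordinal lt_ik); last exact: val_inj.
Qed.

Lemma exists_minimal_tdg_double_star x y n i j a b :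
  i < n -> j < n -> i != j -> a <= i -> b <= j -> (0 < b -> a <= j) -> (0 < a -> b <= i) ->
  x + a + (0 < b) = n -> y + b + (0 < a) = n ->
  exists2 e : rel 'I_n, minimal_tdg x y e & num_edges e = a + b.
Proof.
move=> lt_in lt_jn neq_ij le_ai le_bj le_aj le_bi x_eq y_eq.
pose s := Ordinal lt_in; pose t := Ordinal lt_jn.
pose S := [set v : 'I_n | v < a]; pose T := [set v : 'I_n | v < b].
have card_S : #|S| = a by apply: card_prefix; lia.
have card_T : #|T| = b by apply: card_prefix; lia.
have S_ne0 : (S != set0) = (0 < a) by rewrite -card_gt0 card_S.
have T_ne0 : (T != set0) = (0 < b) by rewrite -card_gt0 card_T.
have s_neq_t : s != t by [].
have s_notin_S : s \notin S by rewrite inE -leqNgt.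
have t_notin_T : t \notin T by rewrite inE -leqNgt.
have t_in_S : t \in S -> T = set0.
  by rewrite inE /t /= => lt_ja; apply/eqP; rewrite -[T == _]negbK T_ne0 -leqNgt; lia.
have s_in_T : s \in T -> S = set0.
  by rewrite inE /s /= => lt_ib; apply/eqP; rewrite -[S == _]negbK S_ne0 -leqNgt; lia.
exists (double_star s t S T); last by rewrite num_edges_double_star // card_S card_T.
apply/minimal_tdgE; split; last exact: double_star_locally_minimal.
split; first exact: double_star_acyclic.
rewrite num_initial_double_star // num_terminal_double_star //.
by rewrite card_S card_T S_ne0 T_ne0; split; lia.
Qed.

Theorem mainTheorem1 (x y n : nat) :
  1 <= x -> 1 <= y -> maxn x y <= n ->
  (exists e : rel 'I_n, minimal_tdg x y e) ->
  let M := if n == maxn x y then 0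
           else if n == (maxn x y).+1 then 2 * n - x - y - 1
           else 2 * n - x - y - 2 in
  (n = maxn x y -> x = y) /\
  (exists e : rel 'I_n, minimal_tdg x y e /\ num_edges e = M) /\
  (forall e : rel 'I_n, minimal_tdg x y e -> num_edges e <= M).
Proof.
move=> x_gt0 y_gt0 max_le_n [e0 min_e0] M.
have full_xy : n = maxn x y -> x = n /\ y = n.
  by case/minimal_tdgE: min_e0 => tdg_e0 _ /esym; exact: tdg_maxn_full tdg_e0.
have le_M (e : rel 'I_n) : minimal_tdg x y e -> num_edges e <= M.
  case/minimal_tdgE => -[_ [x_eq y_eq]] /num_edges_locally_minimal_bound.
  rewrite x_eq y_eq /M => bound.
  case: eqP => [/full_xy[x_n y_n] | n_neq]; last case: eqP => n_eq; by case: bound; lia.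
split; first by case/full_xy=> -> ->.
split=> //; suff [e min_e le_e] : exists2 e : rel 'I_n, minimal_tdg x y e & M <= num_edges e.
  by exists e; split=> //; apply/eqP; rewrite eqn_leq le_e le_M.
rewrite /M; case: eqP => [_ | n_neq_max]; first by exists e0.
case: eqP => [n_eq_max1 | n_neq_max1].
  have [x_eq | y_eq] : x = n.-1 \/ y = n.-1 by lia.
    case: (@exists_minimal_tdg_double_star x y n 0 n.-1 0 (n - y)); try lia.
    by move=> e min_e edges_e; exists e; rewrite // edges_e; lia.
  case: (@exists_minimal_tdg_double_star x y n n.-1 0 (n - x) 0); try lia.
  by move=> e min_e edges_e; exists e; rewrite // edges_e; lia.
case: (@exists_minimal_tdg_double_star x y n n.-1 n.-2 (n - x - 1) (n - y - 1)); try lia.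
by move=> e min_e edges_e; exists e; rewrite // edges_e; lia.
Qed.
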